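(* Let $x_{k+1}=A_kx_k+b_ku_k$, $y_k=c_kx_k$ ($k\in\mathbb{Z}$) be a completely controllable discrete-time system with $A_k\in\mathbb{R}^{n\times n}$, $b_k\in\mathbb{R}^{n\times1}$, $c_k\in\mathbb{R}^{1\times n}$. For $k\in\mathbb{Z}$ let $W_k=[\,b_k,\ A_kb_{k-1},\ A_kA_{k-1}b_{k-2},\ \dots,\ A_k\cdots A_{k-n+2}b_{k-n+1}\,]$ and define scalars by $(\alpha_{k,1},\alpha_{k-1,2},\dots,\alpha_{k-n+1,n})^T=W_k^{-1}A_kW_{k-1}(0,\dots,0,1)^T$. Then the system is algebraically equivalent to a system $(\tilde A_k,\tilde b_k,\tilde c_k)_{k\in\mathbb{Z}}$ where $\tilde b_k=(0,\dots,0,1)^T$ and $\tilde A_k$ is the matrix with ones on the superdiagonal (entries $(i,i+1)$, $1\le i\le n-1$), zeros elsewhere in the first $n-1$ rows, and last row $(\alpha_{k,1},\alpha_{k,2},\dots,\alpha_{k,n})$.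
   Context: Complete controllability: for every $k\in\mathbb{Z}$ and every $\xi_s,\xi_f\in\mathbb{R}^n$ there are controls $u_k,\dots,u_{k+n-1}$ with $x_k=\xi_s\Rightarrow x_{k+n}=\xi_f$ (for such systems every $W_k$ is invertible). Two systems $(A_k,b_k,c_k)$ and $(\tilde A_k,\tilde b_k,\tilde c_k)$ are algebraically equivalent if there are invertible $T_k$ ($k\in\mathbb{Z}$) with $\tilde A_k=T_{k+1}A_kT_k^{-1}$, $\tilde b_k=T_{k+1}b_k$, $\tilde c_k=c_kT_k^{-1}$. *)

From HB Require Import structures.
From mathcomp Require Import all_boot all_order all_algebra.
From mathcomp Require Import reals.
Set Implicit Arguments. Unset Strict Implicit. Unset Printing Implicit Defensive.
Import Order.TTheory GRing.Theory Num.Theory.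
Local Open Scope ring_scope.

Section Sys.
Variables (R : realType) (n : nat).
Variables (A : int -> 'M[R]_n) (b : int -> 'cV[R]_n).

Fixpoint traj (u : int -> R) (k : int) (xi : 'cV[R]_n) (j : nat) : 'cV[R]_n :=
  match j with
  | 0%N => xi
  | j'.+1 => A (k + j'%:Z) *m traj u k xi j' + u (k + j'%:Z) *: b (k + j'%:Z)
  end.

Definition completely_controllable : Prop :=
  forall (k : int) (xs xf : 'cV[R]_n),
    exists u : int -> R, traj u k xs n = xf.

Fixpoint prodA (k : int) (j : nat) : 'M[R]_n :=
  match j with
  | 0%N => 1%:M
  | j'.+1 => A k *m prodA (k - 1) j'
  end.

Definition Wmx (k : int) : 'M[R]_n :=
  \matrix_(i < n, j < n) (prodA k j *m b (k - j%:Z)) i ord0.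

Definition e_last : 'cV[R]_n := \col_(i < n) (i.+1 == n)%:R.

(* v_k = W_k^{-1} A_k W_{k-1} e_n = (alpha_{k,1}, alpha_{k-1,2}, ..., alpha_{k-n+1,n})^T *)
Definition vvec (k : int) : 'cV[R]_n :=
  invmx (Wmx k) *m A k *m Wmx (k - 1) *m e_last.

(* alpha_{m, j+1} (j 0-based) = (v_{m+j})_j *)
Definition alpha (m : int) (j : 'I_n) : R := vvec (m + j%:Z) j ord0.

Definition Atilde (k : int) : 'M[R]_n :=
  \matrix_(i < n, j < n) (if (i.+1 < n)%N then (j == i.+1 :> nat)%:R else alpha k j).

Definition btilde (k : int) : 'cV[R]_n := e_last.
End Sys.

Definition alg_equiv (R : realType) (n : nat)
  (A : int -> 'M[R]_n) (b : int -> 'cV[R]_n) (c : int -> 'rV[R]_n)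
  (At : int -> 'M[R]_n) (bt : int -> 'cV[R]_n) (ct : int -> 'rV[R]_n) : Prop :=
  exists T : int -> 'M[R]_n,
    (forall k, T k \in unitmx) /\
    (forall k, At k = T (k + 1) *m A k *m invmx (T k)) /\
    (forall k, bt k = T (k + 1) *m b k) /\
    (forall k, ct k = c k *m invmx (T k)).

From mathcomp Require Import all_boot all_order all_algebra reals.
From mathcomp Require Import perm zify.
Set Implicit Arguments.
Unset Strict Implicit.
Unset Printing Implicit Defensive.
Import GRing.Theory.
Local Open Scope ring_scope.

(* Complete controllability makes every W_k invertible: starting from x_k = 0,
   x_{k+n} = W_{k+n-1} (u_{k+n-1}, ..., u_k)^T.  As A_k maps the j-th column of
   W_{k-1} to the (j+1)-st column of W_k, the matrix W_k^-1 A_k W_{k-1} is the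
   companion matrix with ones on the subdiagonal and last column v_k; hence
   row i of W_k^-1 A_k is row (i-1) of W_{k-1}^-1 plus v_k(i) times the last
   row of W_{k-1}^-1.  Let the j-th row of T_k be q_{k+j-1} A_{k+j-1} ... A_k,
   where q_m is the last row of W_m^-1.  Then T_{k+1} b_k = e_n, iterating the
   row recursion writes the n-th row of T_{k+1} A_k as sum_j alpha_{k,j+1}
   (row j of T_k), so T_{k+1} A_k = Atilde_k T_k, and T_k W_{k-1} is
   anti-triangular with ones on the anti-diagonal, so T_k is invertible. *)

Lemma col_mul (R : pzSemiRingType) m p q (j : 'I_q)
    (X : 'M[R]_(m, p)) (Y : 'M[R]_(p, q)) :
  col j (X *m Y) = X *m col j Y.
Proof. by rewrite !colE mulmxA. Qed.

Lemma mulmx_sum_col (R : comPzRingType) m p (X : 'M[R]_(m, p)) (u : 'cV[R]_p) :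
  X *m u = \sum_i u i 0 *: col i X.
Proof.
apply/colP => r; rewrite !mxE summxE.
by apply: eq_bigr => i _; rewrite !mxE mulrC.
Qed.

Lemma mulmx_entry_row_col (R : pzSemiRingType) m p q
    (X : 'M[R]_(m, p)) (Y : 'M[R]_(p, q)) i j :
  (X *m Y) i j = (row i X *m col j Y) 0 0.
Proof. by rewrite !mxE; apply: eq_bigr => l _; rewrite !mxE. Qed.

Section UnitMatrices.
Variables (R : comUnitRingType) (n : nat).
Implicit Type X : 'M[R]_n.

Lemma unitmx_of_surjective X :
  (forall y : 'cV_n, exists x, X *m x = y) -> X \in unitmx.
Proof.
move=> surj; have [f Xf] := fin_all_exists (fun j : 'I_n => surj (col j 1%:M)).
suff /mulmx1_unit[] : X *m \matrix_(i, j) f j i 0 = 1%:M by [].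
apply/matrixP => i j; have := congr1 (fun y : 'cV_n => y i 0) (Xf j).
by rewrite !mxE => <-; apply: eq_bigr => l _; rewrite !mxE.
Qed.

(* Reversing the columns makes such a matrix lower unitriangular. *)
Lemma unitmx_antitrig X :
  (forall i j : 'I_n, (i + j <= n.-1)%N -> X i j = ((i + j)%N == n.-1)%:R) ->
  X \in unitmx.
Proof.
move=> antitrig; pose s := perm (@rev_ord_inj n).
suff : col_perm s X \in unitmx by rewrite col_permE unitmx_mul => /andP[].
have sE (j : 'I_n) : (s j = n - j.+1 :> nat)%N by rewrite permE.
rewrite unitmxE det_trig; last first.
  apply/is_trig_mxP => i j lt_ij.
  rewrite mxE antitrig sE; last by have := ltn_ord j; lia.
  by case: eqP => //; have := ltn_ord j; lia.
rewrite big1 ?unitr1 // => i _.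
rewrite mxE antitrig sE; last by have := ltn_ord i; lia.
have -> : (i + (n - i.+1) = n.-1)%N by have := ltn_ord i; lia.
by rewrite eqxx.
Qed.

End UnitMatrices.

Definition companion_mx (R : pzRingType) n (v : 'cV[R]_n.+1) : 'M[R]_n.+1 :=
  \matrix_(i, j) if (j < n)%N then (i == j.+1 :> nat)%:R else v i 0.

Lemma row_companion_mul (R : pzRingType) n m (v : 'cV[R]_n.+1)
    (X : 'M[R]_(n.+1, m)) (i : nat) : (i <= n)%N ->
  row (inord i) (companion_mx v *m X) =
  (if i is i'.+1 then row (inord i') X else 0) + v (inord i) 0 *: row ord_max X.
Proof.
move=> le_in; rewrite row_mul mulmx_sum_row big_ord_recr /= !mxE ltnn.
congr (_ + _); case: i le_in => [|i] lt_in.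
  by apply: big1 => l _; rewrite !mxE /= ltn_ord inordK // scale0r.
rewrite (bigD1 (Ordinal lt_in)) //= big1 ?addr0 => [|l ne_li].
  rewrite !mxE /= lt_in inordK ?eqxx ?scale1r //.
  by congr row; apply: val_inj; rewrite /= inordK // ltnW.
rewrite !mxE /= ltn_ord inordK ?eqSS //.
rewrite (_ : (i == l) = false) ?scale0r //.
by apply: contraNF ne_li => /eqP il; apply/eqP/val_inj.
Qed.

Lemma alg_equiv_of_transform (R : realType) n (A At : int -> 'M[R]_n)
    (b bt : int -> 'cV[R]_n) (c : int -> 'rV[R]_n) (T : int -> 'M[R]_n) :
    (forall k, T k \in unitmx) ->
    (forall k, T (k + 1) *m A k = At k *m T k) ->
    (forall k, T (k + 1) *m b k = bt k) ->
  exists ct, alg_equiv A b c At bt ct.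
Proof.
move=> T_unit TA Tb; exists (fun k => c k *m invmx (T k)), T.
split=> //; split=> [k|]; first by rewrite TA mulmxK.
by split=> // k; rewrite Tb.
Qed.

Section Controllability.
Variables (R : realType) (n : nat) (A : int -> 'M[R]_n) (b : int -> 'cV[R]_n).
Local Notation prodA := (prodA A).
Local Notation W := (Wmx A b).

Lemma prodA_add m i j : prodA m i *m prodA (m - i%:Z) j = prodA m (i + j).
Proof.
elim: i m => [|i IHi] m /=; first by rewrite mul1mx subr0.
by rewrite -mulmxA -IHi; do 2!congr (_ *m _); congr prodA; lia.
Qed.

Lemma col_Wmx m (j : 'I_n) : col j (W m) = prodA m j *m b (m - j%:Z).
Proof. by apply/colP => i; rewrite !mxE. Qed.

Lemma traj_from0 u k j : traj A b u k 0 j =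
  \sum_(i < j) u (k + j%:Z - 1 - i%:Z) *:
                 (prodA (k + j%:Z - 1) i *m b (k + j%:Z - 1 - i%:Z)).
Proof.
elim: j => [|j IHj] /=; first by rewrite big_ord0.
have -> : k + j.+1%:Z - 1 = k + j%:Z by lia.
rewrite IHj big_ord_recl addrC mulmx_sumr /= mul1mx subr0; congr (_ + _).
apply: eq_bigr => i _; rewrite -scalemxAr mulmxA.
by rewrite add0n; congr (u _ *: (_ *m b _)); rewrite /bump /=; lia.
Qed.

Lemma traj_from0_Wmx u k :
  traj A b u k 0 n = W (k + n%:Z - 1) *m \col_(i < n) u (k + n%:Z - 1 - i%:Z).
Proof.
rewrite traj_from0 [RHS]mulmx_sum_col.
by apply: eq_bigr => i _; rewrite col_Wmx mxE.
Qed.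

Lemma Wmx_unit m : completely_controllable A b -> W m \in unitmx.
Proof.
move=> ctrl; apply: unitmx_of_surjective => y.
have [u <-] := ctrl (m - n%:Z + 1) 0 y.
by rewrite traj_from0_Wmx; eexists; congr (W _ *m _); lia.
Qed.

End Controllability.

Section CanonicalForm.
Variables (R : realType) (n' : nat).
Local Notation n := n'.+1.
Variables (A : int -> 'M[R]_n) (b : int -> 'cV[R]_n).
Local Notation prodA := (prodA A).
Local Notation W := (Wmx A b).
Local Notation v := (vvec A b).
Hypothesis W_unit : forall m, W m \in unitmx.

Lemma invWmx_prodA_b m (p : 'I_n) :
  invmx (W m) *m (prodA m p *m b (m - p%:Z)) = col p 1%:M.
Proof. by rewrite -col_Wmx -col_mul mulVmx. Qed.

Lemma invWmx_A_Wmx m : invmx (W m) *m A m *m W (m - 1) = companion_mx (v m).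
Proof.
set M := invmx (W m) *m A m *m W (m - 1).
have vE : v m = col ord_max M.
  rewrite /vvec colE; congr (_ *m _).
  by apply/colP => j; rewrite !mxE andbT eqSS.
apply/matrixP => i c; rewrite [RHS]mxE (_ : M i c = col c M i 0); last first.
  by rewrite [RHS]mxE.
case: ltnP => [lt_cn | le_nc]; last first.
  have -> : c = ord_max by apply: val_inj => /=; have := ltn_ord c; lia.
  by rewrite vE.
have -> : col c M = col (inord c.+1) 1%:M.
  rewrite col_mul col_Wmx -!mulmxA (mulmxA (A m)).
  rewrite (_ : m - 1 - c%:Z = m - c.+1%:Z); last by lia.
  by rewrite -(invWmx_prodA_b m (inord c.+1)) inordK.
by rewrite !mxE -(inj_eq val_inj) /= inordK.
Qed.

Lemma row_invWmx_A m (i : nat) : (i <= n')%N ->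
  row (inord i) (invmx (W m) *m A m) =
  (if i is i'.+1 then row (inord i') (invmx (W (m - 1))) else 0)
  + v m (inord i) 0 *: row ord_max (invmx (W (m - 1))).
Proof. by move=> le_in; rewrite -row_companion_mul // -invWmx_A_Wmx mulmxK. Qed.

Definition pullback_row k i j : 'rV[R]_n :=
  row (inord i) (invmx (W (k + j%:Z - 1)) *m prodA (k + j%:Z - 1) j).

Lemma pullback_row_succ k i j : (i <= n')%N ->
  pullback_row k i j.+1 =
  (if i is i'.+1 then pullback_row k i' j else 0)
  + v (k + j%:Z) (inord i) 0 *: pullback_row k n' j.
Proof.
move=> le_in; rewrite /pullback_row.
rewrite (_ : k + j.+1%:Z - 1 = k + j%:Z); last by lia.
rewrite /= mulmxA row_mul row_invWmx_A // mulmxDl -scalemxAl -row_mul.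
have -> : inord n' = ord_max :> 'I_n by apply: val_inj; rewrite /= inordK.
by case: i le_in => [|i] _; rewrite ?mul0mx // -row_mul.
Qed.

Lemma pullback_row_diag k i : (i <= n')%N ->
  pullback_row k i i.+1 =
  \sum_(j < i.+1) alpha A b k (inord j) *: pullback_row k n' j.
Proof.
elim: i => [|i IHi] le_in; rewrite pullback_row_succ //.
  by rewrite add0r big_ord1 /alpha inordK.
by rewrite IHi ?(ltnW le_in) // [RHS]big_ord_recr /= /alpha inordK.
Qed.

Definition Tmx k : 'M[R]_n := \matrix_(j < n) pullback_row k n' j.

Lemma Tmx_b k : Tmx (k + 1) *m b k = btilde R n k.
Proof.
apply/row_matrixP => j; rewrite row_mul rowK /pullback_row -row_mul -mulmxA.
rewrite (_ : b k = b (k + 1 + j%:Z - 1 - j%:Z)); last by congr b; lia.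
rewrite invWmx_prodA_b; apply/rowP => z.
by rewrite !mxE -(inj_eq val_inj) /= inordK // eqSS eq_sym.
Qed.

Lemma Tmx_A k : Tmx (k + 1) *m A k = Atilde A b k *m Tmx k.
Proof.
apply/row_matrixP => i; rewrite !row_mul rowK.
have -> : pullback_row (k + 1) n' i *m A k = pullback_row k n' i.+1.
  rewrite /pullback_row -row_mul -mulmxA.
  have -> : A k = prodA (k + 1 + i%:Z - 1 - i%:Z) 1.
    by rewrite /= mulmx1; congr A; lia.
  by rewrite prodA_add addn1; congr (row _ (invmx (W _) *m prodA _ _)); lia.
case: (ltnP i n') => [lt_in | le_ni].
  have -> : row i (Atilde A b k) = row (inord i.+1) 1%:M.
    apply/rowP => j.
    by rewrite !mxE ltnS lt_in -(inj_eq val_inj) /= inordK // eq_sym.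
  by rewrite -row_mul mul1mx rowK inordK.
have ei : (i : nat) = n' by have := ltn_ord i; lia.
rewrite mulmx_sum_row ei pullback_row_diag //; apply: eq_bigr => j _.
by rewrite rowK inord_val !mxE ei ltnn.
Qed.

Lemma Tmx_Wmx_antitrig k (i j : 'I_n) : (i + j <= n')%N ->
  (Tmx k *m W (k - 1)) i j = ((i + j)%N == n')%:R.
Proof.
move=> le_ijn; rewrite mulmx_entry_row_col rowK col_Wmx /pullback_row -row_mul.
set m := k + i%:Z - 1.
have -> : prodA (k - 1) j = prodA (m - i%:Z) j by congr prodA; rewrite /m; lia.
have -> : b (k - 1 - j%:Z) = b (m - (i + j)%N%:Z) by congr b; rewrite /m; lia.
rewrite -!mulmxA (mulmxA (prodA m i)) prodA_add.
rewrite (invWmx_prodA_b m (Ordinal (le_ijn : (i + j < n)%N))).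
by rewrite !mxE -(inj_eq val_inj) /= inordK // eq_sym.
Qed.

Lemma Tmx_unit k : Tmx k \in unitmx.
Proof.
suff : Tmx k *m W (k - 1) \in unitmx by rewrite unitmx_mul => /andP[].
exact/unitmx_antitrig/Tmx_Wmx_antitrig.
Qed.

End CanonicalForm.

Theorem proposition1 (R : realType) (n : nat)
  (A : int -> 'M[R]_n) (b : int -> 'cV[R]_n) (c : int -> 'rV[R]_n) :
  completely_controllable A b ->
  exists ct : int -> 'rV[R]_n,
    alg_equiv A b c (Atilde A b) (btilde R n) ct.
Proof.
case: n A b c => [|n'] A b c ctrl.
  apply: (alg_equiv_of_transform c (fun _ : int => @unitmx1 R 0)) => k;
  by rewrite [LHS]flatmx0 [RHS]flatmx0.
have W_unit m := Wmx_unit m ctrl.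
apply: (alg_equiv_of_transform c (Tmx_unit W_unit)) => k.
- exact: Tmx_A.
- exact: Tmx_b.
Qed.
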